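(* Let $\mathcal{A}$ be a finite abelian group and let $\mu$ be the stationary Markov measure on $\mathcal{A}^{\mathbb{Z}}$ with transition matrix $Q=(q^a_b)_{a,b\in\mathcal{A}}$ (where $q^a_b=\Pr[c_1=b\mid c_0=a]$) and stationary probability vector $\nu=(\nu_a)_{a\in\mathcal{A}}$ (with $\nu_a=\Pr[c_0=a]$). If all entries $q^a_b$ are nonzero, then $\mu$ is harmonically mixing.
   Context: Characters of $\mathcal{A}^{\mathbb{Z}}$ are $\chi=\bigotimes_{n\in\mathbb{Z}}\chi_n$ with $\chi_n$ characters of $\mathcal{A}$, all but finitely many trivial; rank$(\chi)$ is the number of nontrivial $\chi_n$. A measure $\mu$ is harmonically mixing if for every $\varepsilon>0$ there is $R$ such that rank$(\chi)>R$ implies $|\int\chi\,d\mu|<\varepsilon$. *)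

From HB Require Import structures.
From mathcomp Require Import all_boot all_order all_algebra.
From mathcomp Require Import all_classical all_reals all_analysis.
From mathcomp Require Import complex.
Set Implicit Arguments. Unset Strict Implicit. Unset Printing Implicit Defensive.
Import Order.TTheory GRing.Theory Num.Theory.
Local Open Scope classical_set_scope.
Local Open Scope ring_scope.

(* Cylinder generators: the sets {c | c_n = a}.  The product sigma-algebra on
   A^Z is the sigma-algebra they generate. *)
(* alias of A carrying the (inessential) pointed structure needed to build
   a measurable type; the point 0 plays no mathematical role *)
Definition ptA (A : finZmodType) : Type := A.
HB.instance Definition _ (A : finZmodType) := Choice.on (ptA A).
HB.instance Definition _ (A : finZmodType) := isPointed.Build (ptA A) (0%R : A).

Definition coord_sets (A : finZmodType) : set (set (int -> ptA A)) :=
  [set C | exists (n : int) (a : A), C = [set c | c n = a]].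

Notation config A := (g_sigma_algebraType (@coord_sets A)).

Definition is_char (R : rcfType) (A : finZmodType) (chi : A -> R[i]) : Prop :=
  (forall a b : A, chi (a + b) = chi a * chi b) /\ (forall a : A, `|chi a| = 1).

Definition char_trivial (R : rcfType) (A : finZmodType) (chi : A -> R[i]) : Prop :=
  forall a : A, chi a = 1.

(* Evaluation of the character  (x)_{n in Z} chi_n  at c, where s lists (without
   repetition) a finite set of indices outside of which every chi_n is trivial. *)
Definition char_eval (R : rcfType) (A : finZmodType) (chi : int -> A -> R[i])
  (s : seq int) (c : int -> A) : R[i] :=
  \prod_(n <- s) chi n (c n).

Definition cintegral (R : realType) d (T : measurableType d)
  (mu : {measure set T -> \bar R}) (f : T -> R[i]) : R[i] :=
  (fine (\int[mu]_x (complex.Re (f x))%:E) +i* fine (\int[mu]_x (complex.Im (f x))%:E))%C.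

Definition stochastic (R : realType) (A : finType) (q : A -> A -> R) : Prop :=
  (forall a b, 0 <= q a b) /\ (forall a, \sum_(b : A) q a b = 1).

Definition stationary_prob (R : realType) (A : finType) (q : A -> A -> R)
  (nu : A -> R) : Prop :=
  (forall a, 0 <= nu a) /\ \sum_(a : A) nu a = 1 /\
  (forall b, \sum_(a : A) nu a * q a b = nu b).

Definition is_markov_measure (R : realType) (A : finZmodType)
  (q : A -> A -> R) (nu : A -> R) (mu : probability (config A) R) : Prop :=
  forall (m : int) (L : nat) (w : 'I_L.+1 -> A),
    mu [set c : config A | forall i : 'I_L.+1, c (m + (i : nat)%:Z)%R = w i]
    = (nu (w ord0) * \prod_(i < L) q (w (inord i)) (w (inord i.+1)))%:E.

Definition harmonically_mixing (R : realType) (A : finZmodType)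
  (mu : probability (config A) R) : Prop :=
  forall eps : R, 0 < eps -> exists R0 : nat,
    forall (chi : int -> A -> R[i]) (s : seq int),
      uniq s ->
      (forall n, is_char (chi n)) ->
      (forall n, n \notin s -> char_trivial (chi n)) ->
      (R0 < count (fun n => `[< ~ char_trivial (chi n) >]) s)%N ->
      `| cintegral mu (char_eval chi s) | < (eps%:C)%C.

From HB Require Import structures.
From mathcomp Require Import all_boot all_order all_algebra.
From mathcomp Require Import all_classical all_reals all_analysis.
From mathcomp Require Import complex.
From mathcomp Require Import zify ring.
Import Order.TTheory GRing.Theory Num.Theory.
Set Implicit Arguments. Unset Strict Implicit. Unset Printing Implicit Defensive.
Local Open Scope classical_set_scope.
Local Open Scope complex_scope.
Local Open Scope ring_scope.

(* If the support of the character (x)_n chi_n lies in the window m < n < m + L,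
   its integral against the Markov measure is sum_a nu_a E_a[prod_j chi_(m+j)(X_j)],
   X being the chain with kernel q.  Let d > 0 be the least entry of q and N = #|A|.
   At a nontrivial factor chi_j, split the two-step kernel q_ab q_bc into its
   uniform part d^2 and the rest: the uniform part integrates chi_j to 0, since a
   nontrivial character sums to 0 over A, and the rest has mass rho = 1 - (N d)^2 < 1.
   Each such contraction consumes two steps, so the integral is at most
   rho^(rank/2), which is small once the rank is large. *)

Lemma char_sum_eq0 (R : rcfType) (A : finZmodType) (chi : A -> R[i]) :
  is_char chi -> ~ char_trivial chi -> \sum_(b : A) chi b = 0.
Proof.
case=> chiD _ /existsNP[b /eqP chib_neq1].
have chib_sum : chi b * \sum_(a : A) chi a = \sum_(a : A) chi a.
  rewrite mulr_sumr; under eq_bigr do rewrite -chiD.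
  by rewrite [RHS](reindex_inj (addrI b)).
have : (chi b - 1) * \sum_(a : A) chi a = 0 by rewrite mulrBl chib_sum mul1r subrr.
by move/eqP; rewrite mulf_eq0 subr_eq0 (negbTE chib_neq1) => /eqP.
Qed.

Lemma normr_convex_comb_le (R : rcfType) (A : finType) (p : A -> R) (g : A -> R[i]) (M : R) :
  (forall b, 0 <= p b) -> \sum_(b : A) p b = 1 ->
  (forall b, `|g b| <= M%:C) -> `|\sum_(b : A) (p b)%:C * g b| <= M%:C.
Proof.
move=> p_ge0 p_sum1 g_le.
apply: le_trans (ler_norm_sum _ _ _) _.
apply: (@le_trans _ _ (\sum_(b : A) (p b * M)%:C)).
  apply: ler_sum => b _; rewrite normrM ger0_norm ?ler0c // rmorphM /=.
  by apply: ler_wpM2l; rewrite ?ler0c.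
by rewrite -rmorph_sum /= -mulr_suml p_sum1 mul1r.
Qed.

Section TwoStepContraction.
Variables (R : rcfType) (A : finType) (q : A -> A -> R) (d : R).
Hypotheses (q_ge : forall a b, d <= q a b) (q_row1 : forall a, \sum_(b : A) q a b = 1).
Hypothesis d_ge0 : 0 <= d.

Lemma card_mul_lbound_le1 : #|A|%:R * d <= 1.
Proof.
have [a _ | A0] := pickP (@predT A); last by rewrite eq_card0 // mul0r ler01.
have -> : #|A|%:R * d = \sum_(b : A) d by rewrite sumr_const mulr_natl.
by rewrite -(q_row1 a); apply: ler_sum => b _; apply: q_ge.
Qed.

Lemma sum_two_step_excess a :
  \sum_(b : A) \sum_(c : A) (q a b * q b c - d ^+ 2) = 1 - (#|A|%:R * d) ^+ 2.
Proof.
have row b : \sum_(c : A) (q a b * q b c - d ^+ 2) = q a b - d ^+ 2 *+ #|A|.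
  by rewrite sumrB -mulr_sumr q_row1 mulr1 sumr_const.
rewrite (eq_bigr _ (fun b _ => row b)) sumrB q_row1 sumr_const.
by rewrite -mulrnA exprMn mulrC -natrX mulr_natr -mulnn.
Qed.

(* The uniform part d^2 of the two-step kernel q a b * q b c integrates chi to 0;
   the remainder has total mass 1 - (#|A| d)^2. *)
Lemma normr_two_step_le (chi u : A -> R[i]) (M : R) a :
  (forall b, `|chi b| = 1) -> \sum_(b : A) chi b = 0 -> (forall c, `|u c| <= M%:C) ->
  `|\sum_(b : A) (q a b)%:C * (chi b * \sum_(c : A) (q b c)%:C * u c)|
    <= ((1 - (#|A|%:R * d) ^+ 2) * M)%:C.
Proof.
move=> chi_norm chi_sum0 u_le.
have split_uniform b : (q a b)%:C * (chi b * \sum_(c : A) (q b c)%:C * u c)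
    = \sum_(c : A) (q a b * q b c - d ^+ 2)%:C * (chi b * u c)
      + (d ^+ 2)%:C * chi b * \sum_(c : A) u c.
  rewrite !mulr_sumr -big_split /=; apply: eq_bigr => c _.
  rewrite rmorphB rmorphM /= rmorphXn /= -[_ * chi b * u c]mulrA -mulrDl subrK.
  by rewrite -mulrA [chi b * _]mulrCA.
rewrite (eq_bigr _ (fun b _ => split_uniform b)) big_split /= -mulr_suml -mulr_sumr.
rewrite chi_sum0 mulr0 mul0r addr0 -(sum_two_step_excess a) mulr_suml rmorph_sum /=.
apply: le_trans (ler_norm_sum _ _ _) _; apply: ler_sum => b _.
rewrite mulr_suml rmorph_sum /=.
apply: le_trans (ler_norm_sum _ _ _) _; apply: ler_sum => c _.
have excess_ge0 : 0 <= q a b * q b c - d ^+ 2.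
  by rewrite subr_ge0 expr2 ler_pM.
rewrite normrM ger0_norm ?ler0c // normrM chi_norm mul1r rmorphM /=.
by apply: ler_wpM2l; rewrite ?ler0c.
Qed.

End TwoStepContraction.

Section ChainExpectation.
Variables (R : rcfType) (A : finType) (q : A -> A -> R).

(* [chain_expect k psi a] is the expectation of psi_0(X_0) psi_1(X_1) ... psi_k(X_k)
   for the Markov chain with kernel q started at X_0 = a. *)
Fixpoint chain_expect (k : nat) (psi : nat -> A -> R[i]) (a : A) : R[i] :=
  match k with
  | 0 => psi 0%N a
  | k'.+1 => psi 0%N a * \sum_(b : A) (q a b)%:C * chain_expect k' (fun j => psi j.+1) b
  end.

End ChainExpectation.

Definition nontrivial_at (R : rcfType) (A : finZmodType) (psi : nat -> A -> R[i]) : pred nat :=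
  fun j => `[< ~ char_trivial (psi j) >].

Lemma count_iota1S (P : pred nat) n :
  count P (iota 1 n.+1) = (P 1%N + count (fun j => P j.+1) (iota 1 n))%N.
Proof. by rewrite -[iota 1 n.+1]/(1%N :: iota (1 + 1) n) iotaDl /= count_map. Qed.

Lemma chain_expect_bound (R : rcfType) (A : finZmodType) (q : A -> A -> R) (d : R) :
  (forall a b, d <= q a b) -> (forall a, \sum_(b : A) q a b = 1) -> 0 <= d ->
  forall k (psi : nat -> A -> R[i]), (forall j, is_char (psi j)) -> forall a,
  `|chain_expect q k psi a|
    <= ((1 - (#|A|%:R * d) ^+ 2) ^+ (count (nontrivial_at psi) (iota 1 k))./2)%:C.
Proof.
move=> q_ge q_row1 d_ge0 k; set rho := 1 - _.
have q_ge0 a b : 0 <= q a b := le_trans d_ge0 (q_ge a b).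
have rho_ge0 : 0 <= rho.
  by rewrite subr_ge0 expr_le1 ?(card_mul_lbound_le1 q_ge q_row1) // mulr_ge0.
have rho_le1 : rho <= 1 by rewrite lerBlDr lerDl sqr_ge0.
elim/ltn_ind: k => k IH psi psi_char a.
have psi_norm j b : `|psi j b| = 1 := (psi_char j).2 b.
case: k IH => [|[|k]] IH.
- by rewrite /= expr0 psi_norm.
- have -> : (count (nontrivial_at psi) (iota 1 1))./2 = 0%N by rewrite /=; case: nontrivial_at.
  rewrite /= normrM psi_norm mul1r.
  by apply: normr_convex_comb_le => // b; rewrite psi_norm.
rewrite [chain_expect _ _ _ _]/= normrM psi_norm mul1r count_iota1S.
have [nontriv1|_] := boolP (nontrivial_at psi 1%N); last first.
  apply: normr_convex_comb_le => // b.
  exact: (IH k.+1 _ (fun j => psi j.+1)).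
have psi1_sum0 : \sum_(b : A) psi 1%N b = 0.
  by apply: char_sum_eq0 => //; apply/asboolP.
apply: le_trans (normr_two_step_le q_ge q_row1 d_ge0 a (psi_norm 1%N) psi1_sum0
  (IH k (leqnSn _) (fun j => psi j.+2) (fun j => psi_char j.+2))) _.
rewrite lecR -exprS; apply: ler_wiXn2l => //.
rewrite count_iota1S.
set c := count _ (iota 1 k).
apply: (@leq_trans (c.+2)./2) => //; apply: half_leq.
by rewrite add1n ltnS; case: nontrivial_at.
Qed.

Section Paths.
Variable A : finType.

Definition ffun_cons n (a : A) (w : {ffun 'I_n -> A}) : {ffun 'I_n.+1 -> A} :=
  [ffun i => if unlift ord0 i is Some j then w j else a].

Lemma ffun_cons0 n a (w : {ffun 'I_n -> A}) : ffun_cons a w ord0 = a.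
Proof. by rewrite ffunE unlift_none. Qed.

Lemma ffun_consS n a (w : {ffun 'I_n -> A}) j : ffun_cons a w (lift ord0 j) = w j.
Proof. by rewrite ffunE liftK. Qed.

Lemma sum_ffun_cons (V : nmodType) n (F : {ffun 'I_n.+1 -> A} -> V) :
  \sum_(w : {ffun 'I_n.+1 -> A}) F w
    = \sum_(a : A) \sum_(w : {ffun 'I_n -> A}) F (ffun_cons a w).
Proof.
rewrite pair_big /=.
pose uncons (w : {ffun 'I_n.+1 -> A}) := (w ord0, [ffun j => w (lift ord0 j)]).
have consK : cancel (fun p => ffun_cons p.1 p.2) uncons.
  case=> a w; rewrite /uncons ffun_cons0; congr (_, _).
  by apply/ffunP => j; rewrite ffunE ffun_consS.
have unconsK : cancel uncons (fun p => ffun_cons p.1 p.2).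
  move=> w; apply/ffunP => i; rewrite ffunE.
  by case: unliftP => [j -> | ->]; rewrite ?ffunE.
by rewrite (reindex _ (onW_bij _ (Bijective consK unconsK))).
Qed.

Lemma inordS_lift n m : (m < n.+1)%N -> (inord m.+1 : 'I_n.+2) = lift ord0 (inord m).
Proof. by move=> m_lt; apply: val_inj; rewrite /= /bump /= !inordK. Qed.

Variables (R : rcfType) (q : A -> A -> R).

Definition path_weight n (w : {ffun 'I_n.+1 -> A}) : R :=
  \prod_(i < n) q (w (inord i)) (w (inord i.+1)).

Lemma path_weight_cons n a (w : {ffun 'I_n.+1 -> A}) :
  path_weight (ffun_cons a w) = q a (w ord0) * path_weight w.
Proof.
rewrite /path_weight big_ord_recl.
have inord0 m : (inord 0 : 'I_m.+1) = ord0 by apply: val_inj; rewrite /= inordK.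
rewrite inord0 ffun_cons0 (@inordS_lift n 0) // ffun_consS inord0; congr (_ * _).
apply: eq_bigr => i _; rewrite /= /bump /= add1n.
by rewrite (@inordS_lift n i (ltnW (ltn_ord i))) (@inordS_lift n i.+1 (ltn_ord i)) !ffun_consS.
Qed.

Lemma sum_path_weight n (f : A -> R[i]) (psi : nat -> A -> R[i]) :
  \sum_(w : {ffun 'I_n.+1 -> A})
     f (w ord0) * ((path_weight w)%:C * \prod_(j < n.+1) psi j (w j))
  = \sum_(a : A) f a * chain_expect q n psi a.
Proof.
elim: n f psi => [|n IH] f psi.
  rewrite sum_ffun_cons; apply: eq_bigr => a _.
  under eq_bigr do rewrite ffun_cons0 /path_weight big_ord0 big_ord1 /= ffun_cons0 mul1r.
  by rewrite sumr_const card_ffun card_ord expn0 mulr1n.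
have peel a (w : {ffun 'I_n.+1 -> A}) :
    f (ffun_cons a w ord0) *
      ((path_weight (ffun_cons a w))%:C * \prod_(j < n.+2) psi j (ffun_cons a w j))
    = f a * (q a (w ord0))%:C * psi 0%N a *
      ((path_weight w)%:C * \prod_(j < n.+1) psi j.+1 (w j)).
  rewrite ffun_cons0 path_weight_cons big_ord_recl ffun_cons0 rmorphM /=.
  under eq_bigr do rewrite ffun_consS.
  ring.
rewrite sum_ffun_cons.
transitivity (\sum_(w : {ffun 'I_n.+1 -> A})
    (\sum_(a : A) f a * (q a (w ord0))%:C * psi 0%N a) *
    ((path_weight w)%:C * \prod_(j < n.+1) psi j.+1 (w j))).
  rewrite exchange_big; apply: eq_bigr => w _.
  by rewrite mulr_suml; apply: eq_bigr => a _; exact: peel.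
rewrite (IH (fun b => \sum_(a : A) f a * (q a b)%:C * psi 0%N a) (fun j => psi j.+1)).
transitivity (\sum_(a : A) \sum_(b : A)
    f a * (q a b)%:C * psi 0%N a * chain_expect q n (fun j => psi j.+1) b).
  by rewrite exchange_big; apply: eq_bigr => b _; rewrite mulr_suml.
by apply: eq_bigr => a _; rewrite /= !mulr_sumr; apply: eq_bigr => b _; ring.
Qed.

End Paths.

Lemma Re_sum (R : rcfType) (I : finType) (f : I -> R[i]) :
  complex.Re (\sum_(i : I) f i) = \sum_(i : I) complex.Re (f i).
Proof. exact: (raddf_sum (@complex.Re R : Rcomplex R -> R)). Qed.

Lemma Im_sum (R : rcfType) (I : finType) (f : I -> R[i]) :
  complex.Im (\sum_(i : I) f i) = \sum_(i : I) complex.Im (f i).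
Proof. exact: (raddf_sum (@complex.Im R : Rcomplex R -> R)). Qed.

Lemma ReZ (R : rcfType) (r : R) (z : R[i]) : complex.Re (r%:C * z) = r * complex.Re z.
Proof. by case: z => a b /=; rewrite mul0r subr0. Qed.

Lemma ImZ (R : rcfType) (r : R) (z : R[i]) : complex.Im (r%:C * z) = r * complex.Im z.
Proof. by case: z => a b /=; rewrite mul0r addr0. Qed.

Section SimpleFunctions.
Context (R : realType) d (T : measurableType d) (mu : {finite_measure set T -> \bar R}).
Variables (I : finType) (S : I -> set T) (p : I -> R).
Hypotheses (S_meas : forall i, measurable (S i)) (mu_S : forall i, mu (S i) = (p i)%:E).

Lemma integral_sum_indic (r : I -> R) :
  (\int[mu]_x (\sum_(i : I) \1_(S i) x * r i)%:E)%E = (\sum_(i : I) r i * p i)%:E.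
Proof.
under eq_integral do rewrite -sumEFin.
rewrite integral_sum //; last first.
  move=> i; under eq_fun do rewrite EFinM muleC.
  exact/integrableZl/integrable_indic.
rewrite -sumEFin; apply: eq_bigr => i _.
under eq_integral do rewrite EFinM muleC.
rewrite integralZl ?integrable_indic // integral_indic // setIT EFinM.
by congr (_ * _)%E; exact: mu_S.
Qed.

Lemma cintegral_sum_indic (V : I -> R[i]) (F : T -> R[i]) :
  (forall x, F x = \sum_(i : I) (\1_(S i) x : R)%:C * V i) ->
  cintegral mu F = \sum_(i : I) (p i)%:C * V i.
Proof.
move=> F_def; rewrite /cintegral.
have -> : (fun x => (complex.Re (F x))%:E) =
    (fun x => (\sum_(i : I) \1_(S i) x * complex.Re (V i))%:E).
  by apply/funext => x; rewrite F_def Re_sum; under eq_bigr do rewrite ReZ.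
have -> : (fun x => (complex.Im (F x))%:E) =
    (fun x => (\sum_(i : I) \1_(S i) x * complex.Im (V i))%:E).
  by apply/funext => x; rewrite F_def Im_sum; under eq_bigr do rewrite ImZ.
rewrite !integral_sum_indic /=.
set z := \sum_(i : I) (p i)%:C * V i.
have -> : \sum_(i : I) complex.Re (V i) * p i = complex.Re z.
  by rewrite Re_sum; apply: eq_bigr => i _; rewrite ReZ mulrC.
have -> : \sum_(i : I) complex.Im (V i) * p i = complex.Im z.
  by rewrite Im_sum; apply: eq_bigr => i _; rewrite ImZ mulrC.
by case: z.
Qed.

End SimpleFunctions.

Definition cylinder (A : finZmodType) (m : int) L (w : 'I_L.+1 -> A) : set (config A) :=
  [set c : config A | forall i : 'I_L.+1, c (m + (i : nat)%:Z)%R = w i].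

Lemma measurable_cylinder (A : finZmodType) (m : int) L (w : 'I_L.+1 -> A) :
  measurable (cylinder m w).
Proof.
have -> : cylinder m w = \bigcap_(i in [set: 'I_L.+1]) [set c | c (m + (i : nat)%:Z) = w i].
  by apply/seteqP; split => c /= cw i; [move=> _; exact: cw | exact: cw i I].
apply: fin_bigcap_measurable; first exact: finite_finset.
by move=> i _; apply: sub_sigma_algebra; exists (m + (i : nat)%:Z), (w i).
Qed.

Lemma prod_eq_sum_cylinders (R : rcfType) (A : finZmodType) (m : int) L
    (psi : nat -> A -> R[i]) (c : config A) :
  \prod_(j < L.+1) psi j (c (m + (j : nat)%:Z)) =
  \sum_(w : {ffun 'I_L.+1 -> A}) (\1_(cylinder m w) c : R)%:C * \prod_(j < L.+1) psi j (w j).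
Proof.
have sum_delta (j : 'I_L.+1) : psi j (c (m + (j : nat)%:Z)) =
    \sum_(a : A) (c (m + (j : nat)%:Z) == a)%:R * psi j a.
  rewrite (bigD1 (c (m + (j : nat)%:Z))) //= eqxx mul1r big1 ?addr0 // => a a_neq.
  by rewrite eq_sym (negbTE a_neq) mul0r.
rewrite (eq_bigr _ (fun j _ => sum_delta j)) bigA_distr_bigA /=.
apply: eq_bigr => w _; rewrite big_split /=; congr (_ * _).
rewrite indicE rmorph_nat.
have [/set_mem c_in | c_notin] := boolP (c \in cylinder m w).
  by rewrite big1 // => j _; rewrite c_in eqxx.
have [j /eqP cj_neq] : exists j : 'I_L.+1, c (m + (j : nat)%:Z) <> w j.
  by apply/existsNP => cw; move/negP: c_notin; apply; apply/mem_set.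
by rewrite (bigD1 j) //= (negbTE cj_neq) mul0r.
Qed.

Lemma exists_window (s : seq int) : exists (m : int) (L : nat),
  forall n, n \in s -> exists2 j : nat, (0 < j < L)%N & n = m + j%:Z.
Proof.
pose B := (\sum_(n <- s) `|n|)%N.
exists (- (B.+1)%:Z), (B.+1).*2 => n n_in.
have n_le : (`|n| <= B)%N by rewrite /B (big_rem n) //= leq_addr.
by exists (absz (n + (B.+1)%:Z)); [apply/andP; split; lia | lia].
Qed.

Section Window.
Variables (R : rcfType) (A : finZmodType) (chi : int -> A -> R[i]) (s : seq int).
Variables (m : int) (L : nat).
Hypothesis s_uniq : uniq s.
Hypothesis s_window : forall n, n \in s -> exists2 j : nat, (0 < j < L)%N & n = m + j%:Z.

Lemma char_eval_window (c : int -> A) :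
  (forall n, n \notin s -> char_trivial (chi n)) ->
  char_eval chi s c = \prod_(j < L.+1) chi (m + (j : nat)%:Z) (c (m + (j : nat)%:Z)).
Proof.
move=> chi_triv.
pose W := map (fun j : nat => m + j%:Z) (iota 0 L.+1).
have -> : \prod_(j < L.+1) chi (m + (j : nat)%:Z) (c (m + (j : nat)%:Z))
    = \prod_(n <- W) chi n (c n).
  by rewrite big_map -(big_mkord xpredT (fun j : nat => chi (m + j%:Z) (c (m + j%:Z)))).
have W_uniq : uniq W by rewrite map_inj_uniq ?iota_uniq // => i j /addrI [].
rewrite -(big_rmcond (fun n => n \in s)); last by move=> n /chi_triv.
rewrite -big_filter /char_eval; apply/perm_big/uniq_perm; rewrite ?filter_uniq //.
move=> n; rewrite mem_filter andb_idr // => /s_window [j /andP [_ jL] ->].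
by apply/mapP; exists j => //; rewrite mem_iota add0n ltnS (ltnW jL).
Qed.

Lemma count_window :
  (count (fun n => `[< ~ char_trivial (chi n) >]) s
    <= count (nontrivial_at (fun j : nat => chi (m + j%:Z))) (iota 1 L))%N.
Proof.
rewrite -!size_filter -(size_map (fun j : nat => m + j%:Z)).
apply: uniq_leq_size; first exact: filter_uniq.
move=> n; rewrite mem_filter => /andP [n_nontriv /s_window [j /andP [j_gt0 jL] n_eq]].
apply/mapP; exists j => //; subst n.
by rewrite mem_filter mem_iota j_gt0 add1n ltnS (ltnW jL); apply/andP.
Qed.

End Window.

Lemma cintegral_markov_char (R : realType) (A : finZmodType) (q : A -> A -> R) (nu : A -> R)
    (mu : probability (config A) R) (chi : int -> A -> R[i]) (s : seq int) (m : int) (L : nat) :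
  is_markov_measure q nu mu -> uniq s ->
  (forall n, n \notin s -> char_trivial (chi n)) ->
  (forall n, n \in s -> exists2 j : nat, (0 < j < L)%N & n = m + j%:Z) ->
  cintegral mu (char_eval chi s)
    = \sum_(a : A) (nu a)%:C * chain_expect q L (fun j => chi (m + j%:Z)) a.
Proof.
move=> markov s_uniq chi_triv s_window.
rewrite (@cintegral_sum_indic _ _ _ mu _ (fun w : {ffun 'I_L.+1 -> A} => cylinder m w)
  (fun w => nu (w ord0) * path_weight q w) _ _
  (fun w => \prod_(j < L.+1) chi (m + (j : nat)%:Z) (w j))).
- by rewrite -sum_path_weight; apply: eq_bigr => w _; rewrite rmorphM -mulrA.
- by move=> w; exact: measurable_cylinder.
- by move=> w; exact: markov.
- move=> c; rewrite (char_eval_window s_uniq s_window) //.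
  exact: (@prod_eq_sum_cylinders _ _ m L (fun j : nat => chi (m + j%:Z))).
Qed.

Lemma exists_pos_lbound (R : realDomainType) (T : finType) (f : T -> R) :
  (forall t, 0 < f t) -> exists2 d, 0 < d & forall t, d <= f t.
Proof.
move=> f_gt0; exists (\big[Order.min/1]_t f t); last by move=> t; exact: bigmin_le.
by apply: lt_bigmin => // t _; exact: f_gt0.
Qed.

Lemma exists_expr_lt (R : realType) (r eps : R) : 0 <= r < 1 -> 0 < eps ->
  exists K : nat, r ^+ K < eps.
Proof.
case/andP=> r0 r1 eps0.
have r_lt1 : `|r| < 1 by rewrite ger0_norm.
have [K _ rK] := cvgr0_norm_lt _ (cvg_expr r_lt1) _ eps0.
by exists K; have := rK K (leqnn K); rewrite ger0_norm // exprn_ge0.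
Qed.

Unset Implicit Arguments.

Theorem mainTheorem6 (R : realType) (A : finZmodType)
  (q : A -> A -> R) (nu : A -> R) (mu : probability (config A) R) :
  stochastic q -> stationary_prob q nu -> is_markov_measure q nu mu ->
  (forall a b : A, q a b != 0) ->
  harmonically_mixing mu.
Proof.
move=> [q_ge0 q_row1] [nu_ge0 [nu_sum1 _]] markov q_neq0 eps eps_gt0.
have q_gt0 (p : A * A) : 0 < q p.1 p.2 by rewrite lt_def q_neq0 q_ge0.
have [d d_gt0 q_ge'] : exists2 d : R, 0 < d & forall p : A * A, d <= q p.1 p.2.
  exact: exists_pos_lbound.
have q_ge a b : d <= q a b := q_ge' (a, b).
have rho_range : 0 <= 1 - (#|A|%:R * d) ^+ 2 < 1.
  have Nd_gt0 : 0 < #|A|%:R * d by rewrite mulr_gt0 // ltr0n; apply/card_gt0P; exists 0.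
  rewrite subr_ge0 expr_le1 ?(card_mul_lbound_le1 q_ge q_row1) ?ltW //=.
  by rewrite ltrBlDr ltrDl exprn_gt0.
have [K rhoK] := exists_expr_lt rho_range eps_gt0.
exists K.*2 => chi s s_uniq chi_char chi_triv rank_gt.
have [m [L s_window]] := exists_window s.
rewrite (cintegral_markov_char markov s_uniq chi_triv s_window).
apply: le_lt_trans (normr_convex_comb_le nu_ge0 nu_sum1
  (chain_expect_bound q_ge q_row1 (ltW d_gt0) L
     (psi := fun j => chi (m + j%:Z)) (fun j => chi_char _))) _.
rewrite ltcR; apply: le_lt_trans rhoK; case/andP: rho_range => rho_ge0 /ltW rho_le1.
apply: ler_wiXn2l => //; rewrite geq_half_double; apply: ltnW.
exact: leq_trans rank_gt (count_window chi s_uniq s_window).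
Qed.
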